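(* Let $s,t:\mathbb R\to(0,\infty)$ and real sequences $\{a_k\}_k$, $\{b_k\}_k$ satisfy \[ a_{k+1}\le\Big(1-\frac{1}{s(b_k)}\Big)a_k+\frac1{t(b_k)}\quad\text{for all }k. \] Assume: (1) there is an interval $I=(\iota,\infty)$ such that $s$ and $t$ are continuously differentiable on $I$, $s(x)>1$ for all $x\in I$, and $\kappa:=s/t$ is non-increasing and convex on $I$; (2) $b_k\to\infty$, there is $\mathsf B$ with $b_{k+1}\le b_k+\mathsf B$ for all $k$ sufficiently large, and $\sum_{k=0}^\infty1/s(b_k)=\infty$; (3) there is $\beta\in(0,1)$ with $\mathsf B[s'(x)-\kappa(x)t'(x)]\ge-1+\beta$ for all $x\in I$. Then $\limsup_{k\to\infty}a_k/\kappa(b_k)<\infty$. *)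

From Stdlib Require Import Reals.
From Coquelicot Require Import Coquelicot.
Open Scope R_scope.

Definition kappa (s t : R -> R) (x : R) : R := s x / t x.

Definition C1_on_Ioi (iota : R) (f : R -> R) : Prop :=
  forall x, iota < x -> ex_derive f x /\ continuous (Derive f) x.

Definition nonincreasing_on_Ioi (iota : R) (f : R -> R) : Prop :=
  forall x y, iota < x -> x <= y -> f y <= f x.

Definition convex_on_Ioi (iota : R) (f : R -> R) : Prop :=
  forall x y l, iota < x -> iota < y -> 0 <= l <= 1 ->
    f (l * x + (1 - l) * y) <= l * f x + (1 - l) * f y.

(* Write K := kappa s t and u_k := 1 / s(b_k), so that 1 / t(b_k) = u_k K(b_k).
   Since K is convex and non-increasing, it lies above its tangent at b_k (or above
   K(b_k) itself, when b_{k+1} <= b_k); together with (3) and the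
   step bound b_{k+1} <= b_k + B this gives, once b_k has entered I,
     K(b_{k+1}) >= K(b_k) - (1 - beta)/t(b_k) = (1 - (1 - beta) u_k) K(b_k).
   Hence for M >= 1/beta the bound a_k <= M K(b_k) propagates through the
   recursion:
     a_{k+1} <= (1 - u_k) M K(b_k) + u_k K(b_k)
             =  M (1 - (1 - beta) u_k) K(b_k) - u_k K(b_k) (M beta - 1)
            <=  M K(b_{k+1}),
   and it holds at the first index after which the above applies if M is also
   at least a_k / K(b_k) there. *)
From Stdlib Require Import Reals Lra Lia.
From Coquelicot Require Import Coquelicot.
Open Scope R_scope.

Lemma convex_chord_slope_le (K : R -> R) (iota x z y : R) :
  convex_on_Ioi iota K -> iota < x -> x < z -> z <= y ->
  (K z - K x) / (z - x) <= (K y - K x) / (y - x).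
Proof.
  intros HK Hx Hxz Hzy.
  set (l := (y - z) / (y - x)).
  assert (Hl : 0 <= l <= 1).
  { unfold l; split.
    - apply Rle_mult_inv_pos; lra.
    - apply Rmult_le_reg_r with (y - x); [lra|].
      unfold Rdiv; rewrite Rmult_assoc, Rinv_l; lra. }
  pose proof (HK x y l Hx ltac:(lra) Hl) as Hconv.
  replace (l * x + (1 - l) * y) with z in Hconv by (unfold l; field; lra).
  assert (Hchord : K z - K x <= (z - x) * ((K y - K x) / (y - x))).
  { replace ((z - x) * ((K y - K x) / (y - x))) with ((1 - l) * (K y - K x))
      by (unfold l; field; lra).
    lra. }
  apply Rmult_le_reg_r with (z - x); [lra|].
  replace ((K z - K x) / (z - x) * (z - x)) with (K z - K x) by (field; lra).
  lra.
Qed.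

Lemma convex_tangent_le (K : R -> R) (iota x y d : R) :
  convex_on_Ioi iota K -> iota < x -> x < y -> is_derive K x d ->
  K x + d * (y - x) <= K y.
Proof.
  intros HK Hx Hxy Hd; apply is_derive_Reals in Hd.
  set (q := (K y - K x) / (y - x)).
  cut (d <= q).
  { intro Hdq.
    replace (K y) with (K x + q * (y - x)) by (unfold q; field; lra).
    apply Rplus_le_compat_l, Rmult_le_compat_r; lra. }
  apply Rnot_lt_le; intro Hqd.
  destruct (Hd (d - q) ltac:(lra)) as [delta Hdelta].
  pose proof (cond_pos delta) as Hdelta_pos.
  set (h := Rmin (delta / 2) (y - x)).
  assert (Hh_pos : 0 < h) by (apply Rmin_glb_lt; lra).
  assert (Hh_le : h <= y - x) by apply Rmin_r.
  assert (Hh_lt : h < delta) by (unfold h; pose proof (Rmin_l (delta / 2) (y - x)); lra).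
  specialize (Hdelta h ltac:(lra) ltac:(rewrite Rabs_pos_eq; lra)).
  pose proof (convex_chord_slope_le K iota x (x + h) y HK Hx ltac:(lra) ltac:(lra))
    as Hslope.
  replace (x + h - x) with h in Hslope by ring.
  fold q in Hslope.
  apply Rabs_def2 in Hdelta; lra.
Qed.

Lemma convex_nonincreasing_step_ge (K : R -> R) (iota x y B d c : R) :
  convex_on_Ioi iota K -> nonincreasing_on_Ioi iota K ->
  iota < x -> iota < y -> y <= x + B -> is_derive K x d ->
  0 <= c -> B * d >= - c ->
  K x - c <= K y.
Proof.
  intros Hconv Hnoninc Hx Hy HyB Hd Hc HBd.
  destruct (Rle_or_lt y x) as [Hyx | Hxy].
  - pose proof (Hnoninc y x Hy Hyx); lra.
  - pose proof (convex_tangent_le K iota x y d Hconv Hx Hxy Hd).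
    destruct (Rle_or_lt 0 d) as [Hd0 | Hd0].
    + assert (0 <= d * (y - x)) by (apply Rmult_le_pos; lra); lra.
    + assert (B * d <= d * (y - x)) by nra; lra.
Qed.

Lemma is_derive_kappa (s t : R -> R) (x : R) :
  ex_derive s x -> ex_derive t x -> t x <> 0 ->
  is_derive (kappa s t) x ((Derive s x - kappa s t x * Derive t x) / t x).
Proof.
  intros Hs Ht Htx.
  replace ((Derive s x - kappa s t x * Derive t x) / t x)
    with ((Derive s x * t x - s x * Derive t x) / t x ^ 2)
    by (unfold kappa; field; exact Htx).
  exact (is_derive_div s t x _ _ (Derive_correct _ _ Hs) (Derive_correct _ _ Ht) Htx).
Qed.

Lemma kappa_step_ge (s t : R -> R) (iota B beta x y : R) :
  (forall x, 0 < s x) -> (forall x, 0 < t x) ->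
  C1_on_Ioi iota s -> C1_on_Ioi iota t ->
  nonincreasing_on_Ioi iota (kappa s t) -> convex_on_Ioi iota (kappa s t) ->
  beta < 1 ->
  (forall x, iota < x -> B * (Derive s x - kappa s t x * Derive t x) >= -1 + beta) ->
  iota < x -> iota < y -> y <= x + B ->
  (1 - (1 - beta) / s x) * kappa s t x <= kappa s t y.
Proof.
  intros Hs Ht Hs_C1 Ht_C1 Hnoninc Hconv Hbeta Hder Hx Hy HyB.
  pose proof (Hs x); pose proof (Ht x).
  replace ((1 - (1 - beta) / s x) * kappa s t x) with (kappa s t x - (1 - beta) / t x)
    by (unfold kappa; field; lra).
  apply (convex_nonincreasing_step_ge _ iota x y B
           ((Derive s x - kappa s t x * Derive t x) / t x)); auto.
  - apply is_derive_kappa; [apply Hs_C1 | apply Ht_C1 | ]; auto; lra.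
  - apply Rle_mult_inv_pos; lra.
  - specialize (Hder x Hx).
    replace (B * ((Derive s x - kappa s t x * Derive t x) / t x))
      with (B * (Derive s x - kappa s t x * Derive t x) / t x) by (field; lra).
    replace (- ((1 - beta) / t x)) with ((-1 + beta) / t x) by (field; lra).
    apply Rle_ge, Rmult_le_compat_r; [apply Rlt_le, Rinv_0_lt_compat |]; lra.
Qed.

Lemma recursion_bound_step (u K0 K1 a0 a1 M beta : R) :
  0 < beta -> 1 <= M * beta -> 0 < u <= 1 -> 0 < K0 ->
  a1 <= (1 - u) * a0 + u * K0 ->
  (1 - (1 - beta) * u) * K0 <= K1 ->
  a0 <= M * K0 ->
  a1 <= M * K1.
Proof.
  intros Hbeta HMbeta Hu HK0 Ha1 HK1 Ha0.
  assert (HM : 0 <= M) by nra.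
  assert ((1 - u) * a0 <= (1 - u) * (M * K0)) by (apply Rmult_le_compat_l; lra).
  assert (M * ((1 - (1 - beta) * u) * K0) <= M * K1) by (apply Rmult_le_compat_l; lra).
  assert (0 <= u * K0 * (M * beta - 1)) by (apply Rmult_le_pos; nra).
  nra.
Qed.
Theorem lemma3p9 (s t : R -> R) (a b : nat -> R) (iota B beta : R)
  (Hs_pos : forall x, 0 < s x) (Ht_pos : forall x, 0 < t x)
  (Hrec : forall k, a (S k) <= (1 - / s (b k)) * a k + / t (b k))
  (* (1) *)
  (Hs_C1 : C1_on_Ioi iota s) (Ht_C1 : C1_on_Ioi iota t)
  (Hs_gt1 : forall x, iota < x -> 1 < s x)
  (Hk_noninc : nonincreasing_on_Ioi iota (kappa s t))
  (Hk_convex : convex_on_Ioi iota (kappa s t))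
  (* (2) *)
  (Hb_lim : is_lim_seq b p_infty)
  (Hb_step : exists N, forall k, (N <= k)%nat -> b (S k) <= b k + B)
  (Hdiv : is_lim_seq (sum_n (fun k => / s (b k))) p_infty)
  (* (3) *)
  (Hbeta : 0 < beta < 1)
  (Hder : forall x, iota < x ->
     B * (Derive s x - kappa s t x * Derive t x) >= -1 + beta) :
  (* limsup_k a_k / kappa(b_k) < +oo *)
  exists M N, forall k, (N <= k)%nat -> a k / kappa s t (b k) <= M.
Proof.
  destruct (proj2 (is_lim_seq_spec b p_infty) Hb_lim iota) as [N1 Hb_in_I].
  destruct Hb_step as [N2 Hb_step].
  set (N0 := max N1 N2).
  set (K := kappa s t).
  assert (HK_pos : forall x, 0 < K x) by (intro x; apply Rdiv_lt_0_compat; auto).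
  set (M := Rmax (/ beta) (a N0 / K (b N0))).
  assert (HMbeta : 1 <= M * beta).
  { replace 1 with (/ beta * beta) by (field; lra).
    apply Rmult_le_compat_r; [lra | apply Rmax_l]. }
  assert (Hbound : forall k, (N0 <= k)%nat -> a k <= M * K (b k)).
  { apply le_ind.
    - apply Rle_div_l; [apply HK_pos | apply Rmax_r].
    - intros k Hk IH.
      assert (Hk_in_I : iota < b k) by (apply Hb_in_I; lia).
      pose proof (Hs_gt1 _ Hk_in_I); pose proof (Ht_pos (b k)).
      apply (recursion_bound_step (/ s (b k)) (K (b k)) _ (a k) _ _ beta); auto; try lra.
      + split; [apply Rinv_0_lt_compat | rewrite <- Rinv_1; apply Rinv_le_contravar]; lra.
      + replace (/ s (b k) * K (b k)) with (/ t (b k)) by (unfold K, kappa; field; lra).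
        apply Hrec.
      + replace ((1 - beta) * / s (b k)) with ((1 - beta) / s (b k)) by reflexivity.
        apply (kappa_step_ge s t iota B beta); auto; try lra.
        * apply Hb_in_I; lia.
        * apply Hb_step; lia. }
  exists M, N0; intros k Hk.
  apply Rle_div_l; [apply HK_pos | apply Hbound, Hk].
Qed.
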